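(* Let $\mathcal{X}\subseteq\mathbb{R}^d$ be a nonempty closed convex bounded set, $R\ge\max_{x,y\in\mathcal{X}}\|x-y\|$, and let $F\colon\mathcal{X}\to\mathbb{R}^d$ be monotone. Let $x_0,x_1,\dots,x_T\in\mathcal{X}$ be the iterates of Algorithm AdaPEG (described in the context), $\bar x_T=\frac1T\sum_{t=1}^Tx_t$, and $\xi_t:=F(x_t)-\widehat{F(x_t)}$. Then \[T\cdot\mathrm{Err}(\bar x_T)\le\sup_{y\in\mathcal{X}}\left(\sum_{t=1}^T\langle\widehat{F(x_t)},x_t-y\rangle\right)+R\left\|\sum_{t=1}^T\xi_t\right\|+\sum_{t=1}^T\langle\xi_t,x_t-x_0\rangle.\]
   Context: $\|\cdot\|$ is the Euclidean norm. Monotone: $\langle F(x)-F(y),x-y\rangle\ge0$ for all $x,y\in\mathcal{X}$. $\widehat{F(x_t)}\in\mathbb{R}^d$ denotes the (stochastic) oracle answer returned when querying $F$ at $x_t$. $\mathrm{Err}(x)=\sup_{y\in\mathcal{X}}\langle F(y),x-y\rangle$. Algorithm AdaPEG: $x_0=z_0\in\mathcal{X}$, $\gamma_0\ge0$, $\eta>0$. For $t=1,\dots,T$: $x_t=\arg\min_{u\in\mathcal{X}}\{\langle\widehat{F(x_{t-1})},u\rangle+\tfrac12\gamma_{t-1}\|u-z_{t-1}\|^2\}$; $\gamma_t=\frac1\eta\sqrt{\eta^2\gamma_0^2+\sum_{s=1}^t\|\widehat{F(x_s)}-\widehat{F(x_{s-1})}\|^2}$; $z_t=\arg\min_{u\in\mathcal{X}}\{\langle\widehat{F(x_t)},u\rangle+\tfrac12\gamma_{t-1}\|u-z_{t-1}\|^2+\tfrac12(\gamma_t-\gamma_{t-1})\|u-x_t\|^2\}$.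 *)

From HB Require Import structures.
From mathcomp Require Import all_boot all_order all_algebra.
From mathcomp Require Import all_classical all_reals all_analysis.
Set Implicit Arguments. Unset Strict Implicit. Unset Printing Implicit Defensive.
Import Order.TTheory GRing.Theory Num.Theory.
Import numFieldNormedType.Exports.
Local Open Scope classical_set_scope.
Local Open Scope ring_scope.

Definition dotp (R : realType) (d : nat) (u v : 'rV[R]_d) : R :=
  \sum_(i < d) u ord0 i * v ord0 i.

Definition enorm (R : realType) (d : nat) (u : 'rV[R]_d) : R :=
  Num.sqrt (dotp u u).

Definition convex_setR (R : realType) (d : nat) (X : set 'rV[R]_d) : Prop :=
  forall x y, X x -> X y -> forall l : R, 0 <= l -> l <= 1 ->
    X (l *: x + (1 - l) *: y).

Definition monotone_on (R : realType) (d : nat) (X : set 'rV[R]_d)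
  (F : 'rV[R]_d -> 'rV[R]_d) : Prop :=
  forall x y, X x -> X y -> 0 <= dotp (F x - F y) (x - y).

Definition is_argmin (R : realType) (d : nat) (X : set 'rV[R]_d)
  (f : 'rV[R]_d -> R) (u : 'rV[R]_d) : Prop :=
  X u /\ forall v, X v -> f u <= f v.

Definition Err (R : realType) (d : nat) (X : set 'rV[R]_d)
  (F : 'rV[R]_d -> 'rV[R]_d) (x : 'rV[R]_d) : \bar R :=
  ereal_sup [set ((dotp (F y) (x - y))%:E) | y in X].

(* The AdaPEG iteration, with ghat t the oracle answer at x t. *)
Definition AdaPEG (R : realType) (d : nat) (X : set 'rV[R]_d)
  (eta : R) (T : nat) (x z ghat : nat -> 'rV[R]_d) (gamma : nat -> R) : Prop :=
  [/\ x 0%N = z 0%N, X (z 0%N), 0 <= gamma 0%N, 0 < eta &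
   forall t, (1 <= t <= T)%N ->
   [/\ is_argmin X (fun u => dotp (ghat t.-1) u
                       + 2^-1 * gamma t.-1 * (enorm (u - z t.-1)) ^+ 2) (x t),
       gamma t = eta^-1 * Num.sqrt (eta ^+ 2 * gamma 0%N ^+ 2
                   + \sum_(1 <= s < t.+1) (enorm (ghat s - ghat s.-1)) ^+ 2) &
       is_argmin X (fun u => dotp (ghat t) u
                       + 2^-1 * gamma t.-1 * (enorm (u - z t.-1)) ^+ 2
                       + 2^-1 * (gamma t - gamma t.-1) * (enorm (u - x t)) ^+ 2)
                 (z t)]].

From HB Require Import structures.
From mathcomp Require Import all_boot all_order all_algebra.
From mathcomp Require Import all_classical all_reals all_analysis.
From mathcomp Require Import lra.
Set Implicit Arguments. Unset Strict Implicit. Unset Printing Implicit Defensive.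
Import Order.TTheory GRing.Theory Num.Theory.
Import numFieldNormedType.Exports.
Local Open Scope classical_set_scope.
Local Open Scope ring_scope.

(* Only the feasibility of the iterates matters, not how AdaPEG produces them.
   Monotonicity gives <F y, x_t - y> <= <F x_t, x_t - y>, so T <F y, xbar - y>
   is at most sum_t <F x_t, x_t - y>.  Writing F x_t = ghat_t + xi_t and
   x_t - y = (x_t - x_0) + (x_0 - y) splits this sum into the oracle regret
   against y, the noise term sum_t <xi_t, x_t - x_0>, and <sum_t xi_t, x_0 - y>,
   which Cauchy-Schwarz bounds by R ||sum_t xi_t||. *)

Section InnerProduct.
Variables (R : realType) (d : nat).
Implicit Types u v w : 'rV[R]_d.

Lemma dotpC u v : dotp u v = dotp v u.
Proof. by rewrite /dotp; apply: eq_bigr => i _; rewrite mulrC. Qed.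

Lemma dotpDl u v w : dotp (u + v) w = dotp u w + dotp v w.
Proof. by rewrite /dotp -big_split; apply: eq_bigr => i _; rewrite mxE mulrDl. Qed.

Lemma dotpNl u w : dotp (- u) w = - dotp u w.
Proof. by rewrite /dotp -sumrN; apply: eq_bigr => i _; rewrite mxE mulNr. Qed.

Lemma dotpBl u v w : dotp (u - v) w = dotp u w - dotp v w.
Proof. by rewrite dotpDl dotpNl. Qed.

Lemma dotpZl (a : R) u w : dotp (a *: u) w = a * dotp u w.
Proof. by rewrite /dotp mulr_sumr; apply: eq_bigr => i _; rewrite mxE mulrA. Qed.

Lemma dotpDr u v w : dotp w (u + v) = dotp w u + dotp w v.
Proof. by rewrite !(dotpC w) dotpDl. Qed.

Lemma dotpBr u v w : dotp w (u - v) = dotp w u - dotp w v.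
Proof. by rewrite !(dotpC w) dotpBl. Qed.

Lemma dotpZr (a : R) u w : dotp w (a *: u) = a * dotp w u.
Proof. by rewrite !(dotpC w) dotpZl. Qed.

Lemma dotp_suml (I : Type) (r : seq I) (P : pred I) (f : I -> 'rV[R]_d) w :
  dotp (\sum_(i <- r | P i) f i) w = \sum_(i <- r | P i) dotp (f i) w.
Proof.
elim/big_rec2: _ => [|i y1 y2 _ <-]; last by rewrite dotpDl.
by rewrite /dotp big1 // => i _; rewrite mxE mul0r.
Qed.

Lemma dotp_sumr (I : Type) (r : seq I) (P : pred I) (f : I -> 'rV[R]_d) w :
  dotp w (\sum_(i <- r | P i) f i) = \sum_(i <- r | P i) dotp w (f i).
Proof. by rewrite dotpC dotp_suml; apply: eq_bigr => i _; rewrite dotpC. Qed.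

Lemma dotpp_ge0 u : 0 <= dotp u u.
Proof. by apply: sumr_ge0 => i _; rewrite -expr2 sqr_ge0. Qed.

Lemma dotpp_eq0_dotp u w : dotp u u = 0 -> dotp u w = 0.
Proof.
move=> /psumr_eq0P uu0; rewrite /dotp big1 // => i _.
have /eqP : u ord0 i * u ord0 i = 0 by apply: uu0 => // j _; rewrite -expr2 sqr_ge0.
by rewrite mulf_eq0 orbb => /eqP ->; rewrite mul0r.
Qed.

Lemma dotp_le_enormM u v : dotp u v <= enorm u * enorm v.
Proof.
rewrite /enorm; set a := Num.sqrt (dotp u u); set b := Num.sqrt (dotp v v).
have a2 : a ^+ 2 = dotp u u by rewrite sqr_sqrtr // dotpp_ge0.
have b2 : b ^+ 2 = dotp v v by rewrite sqr_sqrtr // dotpp_ge0.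
have [a0|an0] := eqVneq a 0.
  by rewrite a0 mul0r dotpp_eq0_dotp // -a2 a0 expr0n.
have [b0|bn0] := eqVneq b 0.
  by rewrite b0 mulr0 dotpC dotpp_eq0_dotp // -b2 b0 expr0n.
have ab_gt0 : 0 < a * b by rewrite mulr_gt0 // lt0r ?an0 ?bn0 sqrtr_ge0.
(* expand 0 <= ||b u - a v||^2 = 2 a b (a b - <u, v>) *)
have := dotpp_ge0 (b *: u - a *: v).
rewrite !(dotpBl, dotpBr, dotpZl, dotpZr) -a2 -b2 (dotpC v u) => h.
rewrite -(ler_pM2l ab_gt0); nra.
Qed.

Lemma mulr_dotp_mean (T : nat) (x : nat -> 'rV[R]_d) w y : (0 < T)%N ->
  T%:R * dotp w (T%:R^-1 *: \sum_(1 <= t < T.+1) x t - y)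
  = \sum_(1 <= t < T.+1) dotp w (x t - y).
Proof.
move=> T_gt0; under [RHS]eq_bigr => t _ do rewrite dotpBr.
rewrite sumrB -dotp_sumr sumr_const_nat subn1 /= dotpBr mulrBr dotpZr.
by rewrite mulrA mulfV ?mul1r ?mulr_natl // pnatr_eq0 -lt0n.
Qed.

Lemma sum_dotp_noise_split (I : Type) (r : seq I) (P : pred I)
    (x g xi : I -> 'rV[R]_d) x0 y :
  \sum_(i <- r | P i) dotp (g i + xi i) (x i - y)
  = \sum_(i <- r | P i) dotp (g i) (x i - y)
    + \sum_(i <- r | P i) dotp (xi i) (x i - x0)
    + dotp (\sum_(i <- r | P i) xi i) (x0 - y).
Proof.
rewrite dotp_suml -!big_split /=; apply: eq_bigr => i _.
by rewrite dotpDl -addrA -dotpDr addrA subrK.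
Qed.

Lemma monotone_sum_dotp_le (X : set 'rV[R]_d) (F : 'rV[R]_d -> 'rV[R]_d)
    (I : eqType) (r : seq I) (P : pred I) (x : I -> 'rV[R]_d) y :
  monotone_on X F -> (forall i, i \in r -> P i -> X (x i)) -> X y ->
  \sum_(i <- r | P i) dotp (F y) (x i - y)
  <= \sum_(i <- r | P i) dotp (F (x i)) (x i - y).
Proof.
move=> monoF Xx Xy; rewrite big_seq_cond [leRHS]big_seq_cond.
apply: ler_sum => i /andP[ri Pi].
by have := monoF _ _ (Xx i ri Pi) Xy; rewrite dotpBl subr_ge0.
Qed.

End InnerProduct.

Lemma ereal_sup_pmul_le (R : realType) (T : Type) (S : set T) (f g : T -> R)
    (k c : R) :
  0 < k -> (forall y, S y -> k * f y <= g y + c) ->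
  (k%:E * ereal_sup [set (f y)%:E | y in S]
   <= ereal_sup [set (g y)%:E | y in S] + c%:E)%E.
Proof.
move=> k_gt0 kfg; rewrite -ereal_sup_pZl //.
apply: ge_ereal_sup => _ [_ [y Sy <-] <-]; rewrite -EFinM.
apply: le_trans (_ : (g y + c)%:E <= _)%E; first by rewrite lee_fin kfg.
by rewrite EFinD leeD2r //; apply: ereal_sup_ubound; exists y.
Qed.

Theorem lemmaB1 (R : realType) (d : nat) (X : set 'rV[R]_d) (Rd : R)
  (F : 'rV[R]_d -> 'rV[R]_d) (eta : R) (T : nat)
  (x z ghat : nat -> 'rV[R]_d) (gamma : nat -> R) :
  X !=set0 -> closed X -> bounded_set X -> convex_setR X ->
  (forall a b, X a -> X b -> enorm (a - b) <= Rd) ->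
  monotone_on X F ->
  AdaPEG X eta T x z ghat gamma ->
  (0 < T)%N ->
  let xbar := (T%:R)^-1 *: \sum_(1 <= t < T.+1) x t in
  let xi := fun t => F (x t) - ghat t in
  ((T%:R)%:E * Err X F xbar <=
    ereal_sup [set ((\sum_(1 <= t < T.+1) dotp (ghat t) (x t - y))%:E) | y in X]
    + (Rd * enorm (\sum_(1 <= t < T.+1) xi t))%:E
    + (\sum_(1 <= t < T.+1) dotp (xi t) (x t - x 0%N))%:E)%E.
Proof.
move=> _ _ _ _ diamX monoF [x0z0 Xz0 _ _ step] T_gt0; cbv zeta.
have Xx0 : X (x 0%N) by rewrite x0z0.
rewrite -addeA -EFinD /Err; apply: ereal_sup_pmul_le; first by rewrite ltr0n.
move=> y Xy; rewrite mulr_dotp_mean //.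
apply: le_trans (monotone_sum_dotp_le monoF _ Xy) _.
  by move=> t; rewrite mem_index_iota => t_range _; have [[]] := step t t_range.
under eq_bigr => t _ do rewrite -[F (x t)](subrK (ghat t)) addrC.
rewrite [leLHS](sum_dotp_noise_split _ _ _ _ _ (x 0%N)) -addrA.
apply: lerD => //; rewrite [leRHS]addrC; apply: lerD => //.
apply: le_trans (dotp_le_enormM _ _) _; rewrite mulrC ler_wpM2r ?sqrtr_ge0 //.
exact: diamX.
Qed.
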